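(* Let $\mathcal{X}$ and $\mathcal{Y}$ be finite sets, let $\Pr$ be a probability distribution on $\mathcal{X}$, let $\delta:\mathcal{X}\times\mathcal{Y}\to\mathbb{R}$, and let $\bar\pi,\pi_1,\dots,\pi_m$ be stochastic policies. Let $\mathcal{D}=\bigcup_{i=1}^m\mathcal{D}^i$ be a log dataset in which, for each $i$, $\mathcal{D}^i$ consists of $n_i$ samples $(x^i_j,y^i_j,\delta^i_j,p^i_j)$, $j=1,\dots,n_i$, where $x^i_j\sim\Pr$, $y^i_j\sim\pi_i(\cdot\mid x^i_j)$, $\delta^i_j=\delta(x^i_j,y^i_j)$, $p^i_j=\pi_i(y^i_j\mid x^i_j)$, all draws independent; let $n=\sum_i n_i$ and define the policy $\pi_{avg}(y\mid x)=\frac1n\sum_{i=1}^m n_i\pi_i(y\mid x)$. Assume $\pi_{avg}$ has support for $\bar\pi$. Then the balanced IPS estimator $$\hat U_{bal}(\bar\pi)=\frac1n\sum_{i=1}^m\sum_{j=1}^{n_i}\delta^i_j\,\frac{\bar\pi(y^i_j\mid x^i_j)}{\pi_{avg}(y^i_j\mid x^i_j)}$$ is unbiased: $\mathbb{E}_{\mathcal{D}}[\hat U_{bal}(\bar\pi)]=U(\bar\pi)$.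
   Context: A stochastic policy $\pi$ assigns to each $x\in\mathcal{X}$ a probability distribution $\pi(\cdot\mid x)$ on $\mathcal{Y}$. The utility of a policy is $U(\pi)=\sum_{x\in\mathcal{X},y\in\mathcal{Y}}\Pr(x)\pi(y\mid x)\delta(x,y)$. A policy $\pi$ has support for a policy $\pi'$ if for all $x\in\mathcal{X},y\in\mathcal{Y}$, $\delta(x,y)\pi'(y\mid x)\neq0$ implies $\pi(y\mid x)>0$. *)

From mathcomp Require Import all_boot all_order all_algebra.
Set Implicit Arguments. Unset Strict Implicit. Unset Printing Implicit Defensive.
Import Order.TTheory GRing.Theory Num.Theory.
Local Open Scope ring_scope.

Section Defs.
Variables (R : realFieldType) (X Y : finType).

Definition is_distr (Pr : X -> R) : Prop :=
  (forall x, 0 <= Pr x) /\ \sum_(x : X) Pr x = 1.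

(* a stochastic policy: pi x y = pi(y | x) *)
Definition is_policy (pi : X -> Y -> R) : Prop :=
  forall x, (forall y, 0 <= pi x y) /\ \sum_(y : Y) pi x y = 1.

Definition utility (Pr : X -> R) (delta : X -> Y -> R) (pi : X -> Y -> R) : R :=
  \sum_(x : X) \sum_(y : Y) Pr x * pi x y * delta x y.

Definition has_support (delta : X -> Y -> R) (pi pi' : X -> Y -> R) : Prop :=
  forall x y, delta x y * pi' x y != 0 -> 0 < pi x y.

Variables (m : nat) (ns : 'I_m -> nat).

Definition ntot : nat := \sum_(i < m) ns i.

Definition pi_avg (pis : 'I_m -> X -> Y -> R) : X -> Y -> R :=
  fun x y => (ntot%:R)^-1 * \sum_(i < m) (ns i)%:R * pis i x y.

Definition sample_idx : finType := {i : 'I_m & 'I_(ns i)}.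

(* a log dataset: for each sample index, the pair (x^i_j, y^i_j);
   delta^i_j = delta x y and p^i_j = pi_i(y|x) are determined by it *)
Definition dataset := {ffun sample_idx -> X * Y}.

Definition dataset_prob (Pr : X -> R) (pis : 'I_m -> X -> Y -> R)
  (D : dataset) : R :=
  \prod_(s : sample_idx) (Pr (D s).1 * pis (tag s) (D s).1 (D s).2).

Definition expect_log (Pr : X -> R) (pis : 'I_m -> X -> Y -> R)
  (f : dataset -> R) : R :=
  \sum_(D : dataset) dataset_prob Pr pis D * f D.

Definition U_bal (delta : X -> Y -> R) (pibar : X -> Y -> R)
  (pis : 'I_m -> X -> Y -> R) (D : dataset) : R :=
  (ntot%:R)^-1 * \sum_(s : sample_idx)
     delta (D s).1 (D s).2 * (pibar (D s).1 (D s).2 / pi_avg pis (D s).1 (D s).2).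

End Defs.
Arguments dataset_prob {R X Y m} ns Pr pis D.
Arguments expect_log {R X Y m} ns Pr pis f.
Arguments U_bal {R X Y m} ns delta pibar pis D.
Arguments pi_avg {R X Y m} ns pis x y.

From mathcomp Require Import all_boot all_order all_algebra ring.
Set Implicit Arguments. Unset Strict Implicit.
Import Order.TTheory GRing.Theory Num.Theory.
Local Open Scope ring_scope.

(* Expanding the product measure of the log dataset, the expectation of a
   statistic of a single sample s integrates out every other sample (each of
   them has total mass one), so it equals the expectation under the law
   Pr(x) pi_(i_s)(y | x) of that sample alone.  Summing over the samples, the
   sample of block i occurs n_i times, so the expectation of the estimator is
   the expectation of delta * pibar / pi_avg under Pr(x) pi_avg(y | x); the
   support hypothesis makes the importance weight cancel. *)

Lemma sum_prod_ffun_marginal (R : comPzRingType) (I T : finType)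
    (w : I -> T -> R) (i0 : I) (g : T -> R) :
  (forall i, \sum_(t : T) w i t = 1) ->
  \sum_(f : {ffun I -> T}) (\prod_(i : I) w i (f i)) * g (f i0) =
  \sum_(t : T) w i0 t * g t.
Proof.
move=> w_mass1.
(* Folding g into the i0-th weight makes the summand a product, which distributes. *)
pose w' i t := w i t * (if i == i0 then g t else 1).
have prod_w' (f : {ffun I -> T}) : (\prod_i w i (f i)) * g (f i0) = \prod_i w' i (f i).
  rewrite (bigD1 i0) // [RHS](bigD1 i0) //= /w' eqxx mulrAC; congr (_ * _).
  by apply: eq_bigr => i /negbTE ->; rewrite mulr1.
rewrite (eq_bigr _ (fun f _ => prod_w' f)) -bigA_distr_bigA (bigD1 i0) //=.
rewrite [\prod_(i | i != i0) _]big1.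
  by rewrite mulr1; apply: eq_bigr => t _; rewrite /w' eqxx.
move=> i /negbTE i_neq0; rewrite -(w_mass1 i).
by apply: eq_bigr => t _; rewrite /w' i_neq0 mulr1.
Qed.

Lemma sum_tag_ord (R : comPzRingType) (I : finType) (n : I -> nat) (F : I -> R) :
  \sum_(s : {i : I & 'I_(n i)}) F (tag s) = \sum_(i : I) (n i)%:R * F i.
Proof.
rewrite -(sig_big_dep xpredT (fun i (_ : 'I_(n i)) => true) (fun i _ => F i)) /=.
by apply: eq_bigr => i _; rewrite sumr_const card_ord mulr_natl.
Qed.

Lemma importance_weightK (R : numFieldType) (p d q : R) :
  (d * q != 0 -> 0 < p) -> p * (d * (q / p)) = d * q.
Proof.
have [->|p_neq0] := eqVneq p 0; last by rewrite mulrCA [p * _]mulrC divfK.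
by rewrite ltxx mul0r => /contraFeq dq_eq0; rewrite dq_eq0.
Qed.

Section LogDataset.
Variables (R : realFieldType) (X Y : finType).
Variables (m : nat) (ns : 'I_m -> nat).
Variables (Pr : X -> R) (pis : 'I_m -> X -> Y -> R).
Hypothesis Pr_distr : is_distr Pr.
Hypothesis pis_policy : forall i, is_policy (pis i).

Lemma sum_joint_eq1 (pi : X -> Y -> R) :
  is_policy pi -> \sum_(z : X * Y) Pr z.1 * pi z.1 z.2 = 1.
Proof.
move=> pi_policy; case: Pr_distr => _ <-.
rewrite -(pair_big xpredT xpredT (fun x y => Pr x * pi x y)) /=.
by apply: eq_bigr => x _; rewrite -mulr_sumr; case: (pi_policy x) => _ ->; rewrite mulr1.
Qed.

Lemma expect_log_sample (s : sample_idx ns) (g : X * Y -> R) :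
  expect_log ns Pr pis (fun D => g (D s)) =
  \sum_(z : X * Y) Pr z.1 * pis (tag s) z.1 z.2 * g z.
Proof.
rewrite /expect_log /dataset_prob.
rewrite (sum_prod_ffun_marginal (w := fun s' z => Pr z.1 * pis (tag s') z.1 z.2)) //.
by move=> s'; exact: sum_joint_eq1.
Qed.

Lemma expect_log_mean (g : X * Y -> R) :
  expect_log ns Pr pis (fun D => (ntot ns)%:R^-1 * \sum_(s : sample_idx ns) g (D s)) =
  \sum_(z : X * Y) Pr z.1 * pi_avg ns pis z.1 z.2 * g z.
Proof.
rewrite /expect_log; under eq_bigr => D _ do rewrite mulrCA mulr_sumr.
rewrite -mulr_sumr exchange_big /=.
under eq_bigr => s _ do rewrite -/(expect_log ns Pr pis _) expect_log_sample.
rewrite exchange_big mulr_sumr; apply: eq_bigr => z _ /=.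
rewrite (sum_tag_ord ns (fun i => Pr z.1 * pis i z.1 z.2 * g z)).
rewrite /pi_avg mulrCA !mulr_sumr mulr_suml; apply: eq_bigr => i _; ring.
Qed.

End LogDataset.

Theorem proposition5p2 (R : realFieldType) (X Y : finType)
  (Pr : X -> R) (delta : X -> Y -> R) (pibar : X -> Y -> R)
  (m : nat) (ns : 'I_m -> nat) (pis : 'I_m -> X -> Y -> R) :
  is_distr Pr ->
  is_policy pibar ->
  (forall i, is_policy (pis i)) ->
  has_support delta (pi_avg ns pis) pibar ->
  expect_log ns Pr pis (U_bal ns delta pibar pis) = utility Pr delta pibar.
Proof.
(* Unbiasedness holds for any weights pibar, not only for policies. *)
move=> Pr_distr _ pis_policy support.
pose w z := delta z.1 z.2 * (pibar z.1 z.2 / pi_avg ns pis z.1 z.2).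
rewrite /U_bal (expect_log_mean ns Pr_distr pis_policy w) /utility pair_bigA /=.
apply: eq_bigr => z _.
rewrite /w -mulrA importance_weightK; last exact: support.
by rewrite [delta _ _ * _]mulrC mulrA.
Qed.
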